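(* For positive integers $a,c$ let $f^a_c(x,y,z)=ax^2+c(y^2+yz+z^2)$ with $x,y,z\in\mathbb{Z}$. There exist no positive integers $a,c$ such that $f^a_c$ represents every natural number.
   Context: Natural numbers are the positive integers $1,2,3,\dots$. *)

From Stdlib Require Import ZArith.
Open Scope Z_scope.

Definition f (a c x y z : Z) : Z := a * x ^ 2 + c * (y ^ 2 + y * z + z ^ 2).

Definition represents (a c n : Z) : Prop :=
  exists x y z : Z, f a c x y z = n.

From Stdlib Require Import ZArith Lia.
Open Scope Z_scope.

(* The values of [y^2 + y z + z^2] up to 10 are 0, 1, 3, 4, 7, 9.  Since both
   parts of [f a c] are nonnegative, representing 1 forces [a = 1] or [c = 1],
   and representing 2 then leaves only (a, c) = (1, 1), (1, 2), (2, 1).  These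
   three forms miss 6, 5 and 10 respectively. *)

Definition eisenstein_norm (y z : Z) : Z := y ^ 2 + y * z + z ^ 2.

Lemma eisenstein_norm_nonneg y z : 0 <= eisenstein_norm y z.
Proof. unfold eisenstein_norm; nia. Qed.

Lemma eisenstein_norm_le10 y z : eisenstein_norm y z <= 10 ->
  let q := eisenstein_norm y z in
  q = 0 \/ q = 1 \/ q = 3 \/ q = 4 \/ q = 7 \/ q = 9.
Proof.
  unfold eisenstein_norm; intros Hq; simpl.
  (* 4 (y^2 + y z + z^2) = (2 y + z)^2 + 3 z^2 bounds both variables. *)
  assert (Hsum : (2 * y + z) ^ 2 + 3 * z ^ 2 <= 40) by nia.
  assert (Hz : -3 <= z <= 3) by nia.
  assert (Hy : -5 <= y <= 5) by nia.
  assert (Ez : z = -3 \/ z = -2 \/ z = -1 \/ z = 0 \/ z = 1 \/ z = 2 \/ z = 3) by lia.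
  assert (Ey : y = -5 \/ y = -4 \/ y = -3 \/ y = -2 \/ y = -1 \/ y = 0
         \/ y = 1 \/ y = 2 \/ y = 3 \/ y = 4 \/ y = 5) by lia.
  repeat destruct Ez as [-> | Ez]; repeat destruct Ey as [-> | Ey];
    subst; simpl in *; lia.
Qed.

Lemma square_le10 x : x ^ 2 <= 10 ->
  x ^ 2 = 0 \/ x ^ 2 = 1 \/ x ^ 2 = 4 \/ x ^ 2 = 9.
Proof.
  intros Hx.
  assert (Ex : x = -3 \/ x = -2 \/ x = -1 \/ x = 0 \/ x = 1 \/ x = 2 \/ x = 3) by nia.
  repeat destruct Ex as [-> | Ex]; subst; simpl; lia.
Qed.

Lemma represents_le10 a c n : 0 < a -> 0 < c -> n <= 10 -> represents a c n ->
  exists X Q, a * X + c * Q = n /\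
    (X = 0 \/ X = 1 \/ X = 4 \/ X = 9) /\
    (Q = 0 \/ Q = 1 \/ Q = 3 \/ Q = 4 \/ Q = 7 \/ Q = 9).
Proof.
  intros Ha Hc Hn [x [y [z <-]]]; unfold f in Hn.
  fold (eisenstein_norm y z) in Hn |- *.
  pose proof (eisenstein_norm_nonneg y z).
  assert (Hx2 : 0 <= x ^ 2) by nia.
  exists (x ^ 2), (eisenstein_norm y z); split; [reflexivity | split].
  - apply square_le10; nia.
  - apply eisenstein_norm_le10; nia.
Qed.

Lemma represents_1_2_coefficients a c : 0 < a -> 0 < c ->
  represents a c 1 -> represents a c 2 ->
  (a = 1 /\ c = 1) \/ (a = 1 /\ c = 2) \/ (a = 2 /\ c = 1).
Proof.
  intros Ha Hc H1 H2.
  destruct (represents_le10 a c 1 Ha Hc ltac:(lia) H1) as [X1 [Q1 [E1 [HX1 HQ1]]]].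
  destruct (represents_le10 a c 2 Ha Hc ltac:(lia) H2) as [X2 [Q2 [E2 [HX2 HQ2]]]].
  assert (Hac : a = 1 \/ c = 1).
  { repeat destruct HX1 as [-> | HX1]; repeat destruct HQ1 as [-> | HQ1]; subst; lia. }
  repeat destruct HX2 as [-> | HX2]; repeat destruct HQ2 as [-> | HQ2]; subst; lia.
Qed.

Ltac refute_small_representation a c n :=
  let X := fresh "X" in let Q := fresh "Q" in
  let E := fresh "E" in let HX := fresh "HX" in let HQ := fresh "HQ" in
  intros Hrep;
  destruct (represents_le10 a c n ltac:(lia) ltac:(lia) ltac:(lia) Hrep)
    as [X [Q [E [HX HQ]]]];
  repeat destruct HX as [-> | HX]; repeat destruct HQ as [-> | HQ]; subst; lia.

Lemma not_represents_1_1_6 : ~ represents 1 1 6.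
Proof. refute_small_representation 1 1 6. Qed.

Lemma not_represents_1_2_5 : ~ represents 1 2 5.
Proof. refute_small_representation 1 2 5. Qed.

Lemma not_represents_2_1_10 : ~ represents 2 1 10.
Proof. refute_small_representation 2 1 10. Qed.

Theorem theorem3p9 :
  ~ (exists a c : Z, 0 < a /\ 0 < c /\
       forall n : Z, 0 < n -> represents a c n).
Proof.
  intros [a [c [Ha [Hc Hrep]]]].
  destruct (represents_1_2_coefficients a c Ha Hc
              (Hrep 1 ltac:(lia)) (Hrep 2 ltac:(lia))) as [[-> ->] | [[-> ->] | [-> ->]]].
  - exact (not_represents_1_1_6 (Hrep 6 ltac:(lia))).
  - exact (not_represents_1_2_5 (Hrep 5 ltac:(lia))).
  - exact (not_represents_2_1_10 (Hrep 10 ltac:(lia))).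
Qed.
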